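(* Let $S$ be a set. Every structured set of $S$-probabilities is a $\vee$-specific set of $S$-probabilities, and every $\vee$-specific set of $S$-probabilities is a weakly structured set of $S$-probabilities; i.e. $\mathcal C_3\subseteq\mathcal C_2\subseteq\mathcal C_4$.
   Context: An $S$-probability is a function $p\colon S\to[0,1]$; sets $P$ of them are ordered pointwise, $0,1$ are constant functions, $p':=1-p$, sums are pointwise; $p\vee q$ denotes the supremum in $P$. $p\wedge q=0$ means the only $x\in P$ with $x\le p,q$ is $x=0$; $p\perp q$ means $p\le 1-q$. Conditions: (1) $0,1\in P$; (2) $p\in P\Rightarrow 1-p\in P$; (3) $p,q\in P$, $p\wedge q=0\Rightarrow p+q\in P$; (6) $p,q\in P$, $p\wedge q=0\Rightarrow p+q\in P$ and $p+q$ is the supremum $p\vee q$ in $P$; (7) $p,q,r\in P$, $p\perp q$, $q\perp r$, $p\wedge r=0\Rightarrow p+q+r\in P$; (8) $p,q,r\in P$, $p\perp q$, $q\perp r$, $p\wedge r=0\Rightarrow p+q+r\le 1$. $\mathcal C_1$: specific sets (satisfying (1),(2),(3)); $\mathcal C_2$: $\vee$-specific sets (specific sets satisfying (6)); $\mathcal C_3$: structured sets (satisfying (1),(2),(7)); $\mathcal C_4$: weakly structured sets (satisfying (1),(2),(8)). *)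

From Stdlib Require Import Reals.
Set Implicit Arguments.
Open Scope R_scope.

Section SProb.
Variable S : Type.

Definition sprob := S -> R.

Definition is_sprob (p : sprob) : Prop := forall s, 0 <= p s <= 1.

Definition is_sprob_set (P : sprob -> Prop) : Prop := forall p, P p -> is_sprob p.

Definition szero : sprob := fun _ => 0.
Definition sone : sprob := fun _ => 1.
Definition scompl (p : sprob) : sprob := fun s => 1 - p s.
Definition sadd (p q : sprob) : sprob := fun s => p s + q s.

Definition sle (p q : sprob) : Prop := forall s, p s <= q s.

(* p /\ q = 0 in P: the only x in P below p and q is 0 *)
Definition meet_zero (P : sprob -> Prop) (p q : sprob) : Prop :=
  forall x, P x -> sle x p -> sle x q -> x = szero.

Definition sperp (p q : sprob) : Prop := sle p (scompl q).

Definition is_sup (P : sprob -> Prop) (r p q : sprob) : Prop :=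
  P r /\ sle p r /\ sle q r /\
  (forall x, P x -> sle p x -> sle q x -> sle r x).

Definition cond1 (P : sprob -> Prop) : Prop := P szero /\ P sone.
Definition cond2 (P : sprob -> Prop) : Prop := forall p, P p -> P (scompl p).
Definition cond3 (P : sprob -> Prop) : Prop :=
  forall p q, P p -> P q -> meet_zero P p q -> P (sadd p q).
Definition cond6 (P : sprob -> Prop) : Prop :=
  forall p q, P p -> P q -> meet_zero P p q ->
    P (sadd p q) /\ is_sup P (sadd p q) p q.
Definition cond7 (P : sprob -> Prop) : Prop :=
  forall p q r, P p -> P q -> P r -> sperp p q -> sperp q r -> meet_zero P p r ->
    P (sadd (sadd p q) r).
Definition cond8 (P : sprob -> Prop) : Prop :=
  forall p q r, P p -> P q -> P r -> sperp p q -> sperp q r -> meet_zero P p r ->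
    sle (sadd (sadd p q) r) sone.

Definition specific (P : sprob -> Prop) : Prop :=
  is_sprob_set P /\ cond1 P /\ cond2 P /\ cond3 P.
Definition vee_specific (P : sprob -> Prop) : Prop :=
  specific P /\ cond6 P.
Definition structured (P : sprob -> Prop) : Prop :=
  is_sprob_set P /\ cond1 P /\ cond2 P /\ cond7 P.
Definition weakly_structured (P : sprob -> Prop) : Prop :=
  is_sprob_set P /\ cond1 P /\ cond2 P /\ cond8 P.

End SProb.

(* Condition (7) with the middle term [0] gives (3); with the middle term [1 - x] for an upper
   bound [x] of [p] and [q] it gives [p + (1 - x) + q <= 1], i.e. [p + q <= x], so [p + q] is the
   supremum.  Conversely, under (6), [p ⊥ q] and [q ⊥ r] make [1 - q] an upper bound of [p] and
   [r], hence of their supremum [p + r], which is (8). *)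
From Stdlib Require Import Reals Lra FunctionalExtensionality.

Set Implicit Arguments.

Section SProbLemmas.
Variable S : Type.
Implicit Types (P : sprob S -> Prop) (p q r x : sprob S).

Lemma scomplK p : scompl (scompl p) = p.
Proof. apply functional_extensionality; intro s; unfold scompl; lra. Qed.

Lemma sadd0r p : sadd p (@szero S) = p.
Proof. apply functional_extensionality; intro s; unfold sadd, szero; lra. Qed.

Lemma sperp_sym p q : sperp p q -> sperp q p.
Proof. unfold sperp, sle, scompl; intros Hpq s; specialize (Hpq s); lra. Qed.

Lemma sperp0r p : is_sprob p -> sperp p (@szero S).
Proof. unfold sperp, sle, scompl, szero; intros Hp s; specialize (Hp s); lra. Qed.

Lemma sle_sperp_scompl p x : sle p x -> sperp p (scompl x).
Proof. unfold sperp; rewrite scomplK; auto. Qed.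

Lemma sprob_sle_sone p : is_sprob p -> sle p (@sone S).
Proof. unfold sle, sone; intros Hp s; specialize (Hp s); lra. Qed.

Lemma sle_saddl p q : is_sprob q -> sle p (sadd p q).
Proof. unfold sle, sadd; intros Hq s; specialize (Hq s); lra. Qed.

Lemma sle_saddr p q : is_sprob p -> sle q (sadd p q).
Proof. unfold sle, sadd; intros Hp s; specialize (Hp s); lra. Qed.

Lemma sle_sadd_scompl p q r :
  sle (sadd p r) (scompl q) <-> sle (sadd (sadd p q) r) (@sone S).
Proof.
  unfold sle, sadd, scompl, sone; split; intros H s; specialize (H s); lra.
Qed.

Lemma cond7_cond3 P : is_sprob_set P -> P (@szero S) -> cond7 P -> cond3 P.
Proof.
  intros Hs H0 H7 p q Hp Hq Hpq.
  rewrite <- (sadd0r p); apply H7; auto.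
  - exact (sperp0r (Hs p Hp)).
  - exact (sperp_sym (sperp0r (Hs q Hq))).
Qed.

Lemma cond7_sadd_least P p q :
  is_sprob_set P -> cond2 P -> cond7 P -> P p -> P q -> meet_zero P p q ->
  forall x, P x -> sle p x -> sle q x -> sle (sadd p q) x.
Proof.
  intros Hs H2 H7 Hp Hq Hpq x Hx Hpx Hqx.
  assert (Hcx : P (scompl x)) by exact (H2 x Hx).
  assert (Hsum : P (sadd (sadd p (scompl x)) q)).
  { apply H7; auto.
    - exact (sle_sperp_scompl Hpx).
    - exact (sperp_sym (sle_sperp_scompl Hqx)). }
  rewrite <- (scomplK x); apply sle_sadd_scompl.
  exact (sprob_sle_sone (Hs _ Hsum)).
Qed.

Lemma cond7_cond6 P :
  is_sprob_set P -> P (@szero S) -> cond2 P -> cond7 P -> cond6 P.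
Proof.
  intros Hs H0 H2 H7 p q Hp Hq Hpq.
  assert (Hsum : P (sadd p q)) by exact (cond7_cond3 Hs H0 H7 Hp Hq Hpq).
  repeat split; auto.
  - exact (sle_saddl p (Hs q Hq)).
  - exact (sle_saddr q (Hs p Hp)).
  - exact (cond7_sadd_least Hs H2 H7 Hp Hq Hpq).
Qed.

Lemma cond6_cond8 P : cond2 P -> cond6 P -> cond8 P.
Proof.
  intros H2 H6 p q r Hp Hq Hr Hpq Hqr Hpr.
  destruct (H6 p r Hp Hr Hpr) as [_ [_ [_ [_ Hleast]]]].
  apply sle_sadd_scompl, Hleast; auto.
  exact (sperp_sym Hqr).
Qed.

End SProbLemmas.

Theorem lemma3p1 (S : Type) (P : sprob S -> Prop) :
  (structured P -> vee_specific P) /\ (vee_specific P -> weakly_structured P).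
Proof.
  split.
  - intros (Hs & [H0 H1] & H2 & H7).
    split; [split; [| split; [| split]] |].
    + exact Hs.
    + exact (conj H0 H1).
    + exact H2.
    + exact (cond7_cond3 Hs H0 H7).
    + exact (cond7_cond6 Hs H0 H2 H7).
  - intros [(Hs & H01 & H2 & _) H6].
    exact (conj Hs (conj H01 (conj H2 (cond6_cond8 H2 H6)))).
Qed.
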